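(* Let $\lambda\in(0,1)$ and $s=(s_1,s_2)\in\mathbb{R}^2$ with $|s|=1$, $s\neq e_1$, and either $s=e_2$ or $s_1s_2\neq0$. (i) For every $\gamma\in K_{s,\lambda}$ and $R\in SO(2)$ there exists $N\in\mathcal{M}_{e_1}\cap\mathcal{N}_s$ such that $Ne_1=Re_1$ and $\lambda N+(1-\lambda)R=R(\mathbb{I}+\gamma e_1\otimes e_2)$. (ii) Let $N\in\mathcal{N}_s$ and $R\in SO(2)$ with $Re_1=Ne_1$. Then there exists $\gamma\in K_{s,\lambda}$ such that $\lambda N+(1-\lambda)R=R(\mathbb{I}+\gamma e_1\otimes e_2)$.
   Context: $\mathcal{M}_{e_1}=\{F\in\mathbb{R}^{2\times2}:\det F=1,|Fe_1|=1\}$; $\mathcal{N}_s=\{F\in\mathbb{R}^{2\times2}:\det F=1,|Fs|\le1\}$. $K_{s,\lambda}=\{0\}$ if $s=e_2$; $K_{s,\lambda}=[-2\frac{s_1}{s_2}\lambda,0]$ if $s_1s_2>0$; $K_{s,\lambda}=[0,-2\frac{s_1}{s_2}\lambda]$ if $s_1s_2<0$. *)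

From HB Require Import structures.
From mathcomp Require Import all_boot all_order all_algebra.
Set Implicit Arguments. Unset Strict Implicit. Unset Printing Implicit Defensive.
Import Order.TTheory GRing.Theory Num.Theory.
Local Open Scope ring_scope.

Section Defs.
Variable R : rcfType.

Definition e1 : 'cV[R]_2 := \col_i (if i == 0 :> nat then 1 else 0).
Definition e2 : 'cV[R]_2 := \col_i (if i == 1 :> nat then 1 else 0).

Definition vnorm (v : 'cV[R]_2) : R := Num.sqrt (\sum_i v i 0 ^+ 2).

Definition tens (a b : 'cV[R]_2) : 'M[R]_2 := a *m b^T.

Definition SO2 (Q : 'M[R]_2) : Prop := Q^T *m Q = 1%:M /\ \det Q = 1.

Definition M_e1 (F : 'M[R]_2) : Prop := \det F = 1 /\ vnorm (F *m e1) = 1.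

Definition N_s (s : 'cV[R]_2) (F : 'M[R]_2) : Prop :=
  \det F = 1 /\ vnorm (F *m s) <= 1.

(* K_{s,lambda}; s1 = s 0 0, s2 = s 1 0. Empty in cases not covered by the paper. *)
Definition K_s (s : 'cV[R]_2) (lam : R) (g : R) : Prop :=
  let s1 := s 0 0 in let s2 := s 1 0 in
  if s == e2 then g = 0
  else if 0 < s1 * s2 then (-(2 * (s1 / s2) * lam) <= g <= 0 : Prop)
  else if s1 * s2 < 0 then (0 <= g <= -(2 * (s1 / s2) * lam) : Prop)
  else False.

End Defs.

(* A matrix N with det N = 1 and N e1 = Q e1, Q a rotation, is Q (I + a e1 (x) e2)
   with a = (Q^T N)_12, because Q^T N fixes e1 and has determinant 1; conversely every
   such product lies in M_{e1}.  Then lam N + (1 - lam) Q = Q (I + lam a e1 (x) e2),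
   and since Q is an isometry, |N s|^2 <= 1 reads (s1 + a s2)^2 + s2^2 <= 1, i.e.
   a s2 (a s2 + 2 s1) <= 0, which for g = lam a is exactly g \in K_{s,lam}. *)

From HB Require Import structures.
From mathcomp Require Import all_boot all_order all_algebra.
From mathcomp Require Import ring lra.
Set Implicit Arguments.
Unset Strict Implicit.
Unset Printing Implicit Defensive.

Import Order.TTheory GRing.Theory Num.Theory.
Local Open Scope ring_scope.

Lemma sum_ord2 (V : nmodType) (F : 'I_2 -> V) : \sum_i F i = F 0 + F 1.
Proof. by rewrite big_ord_recl big_ord1; congr (F _ + F _); apply: val_inj. Qed.

Lemma ord2P (i : 'I_2) : i = 0 \/ i = 1.
Proof. by case: i => [[|[|//]] ?]; [left | right]; apply: val_inj. Qed.

Lemma matrix2P (T : Type) (A B : 'M[T]_2) :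
  A 0 0 = B 0 0 -> A 0 1 = B 0 1 -> A 1 0 = B 1 0 -> A 1 1 = B 1 1 -> A = B.
Proof.
move=> ? ? ? ?; apply/matrixP => i j.
by case: (ord2P i) => ->; case: (ord2P j) => ->.
Qed.

Lemma col2P (T : Type) (u v : 'cV[T]_2) : u 0 0 = v 0 0 -> u 1 0 = v 1 0 -> u = v.
Proof. by move=> ? ?; apply/matrixP => i j; rewrite ord1; case: (ord2P i) => ->. Qed.

Lemma det_mx2 (R : comNzRingType) (A : 'M[R]_2) :
  \det A = A 0 0 * A 1 1 - A 0 1 * A 1 0.
Proof.
rewrite (expand_det_row _ 0) sum_ord2 /cofactor !det_mx11 !mxE /= expr0 expr1.
have -> : lift 0 0 = 1 :> 'I_2 by apply: val_inj.
have -> : lift 1 0 = 0 :> 'I_2 by apply: val_inj.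
ring.
Qed.

Lemma mul_subr_le0 (R : realDomainType) (x u v : R) : u <= v ->
  ((x - u) * (x - v) <= 0) = (u <= x <= v).
Proof. by move=> le_uv; apply/idP/andP => [h | [h1 h2]]; [split|]; nra. Qed.

Section Shear.
Variable R : rcfType.
Local Notation e1 := (e1 R).
Local Notation e2 := (e2 R).

Definition shear (a : R) : 'M[R]_2 := 1%:M + a *: tens e1 e2.

Local Ltac mx2E := rewrite /shear /tens /e1 /e2 ?(mxE, sum_ord2, big_ord1) /= ?mulr1n ?mulr0n.

Lemma shear_e1 (a : R) : shear a *m e1 = e1.
Proof. by apply: col2P; mx2E; ring. Qed.

Lemma det_shear (a : R) : \det (shear a) = 1.
Proof. by rewrite det_mx2; mx2E; ring. Qed.

Lemma fixed_e1_shear (M : 'M[R]_2) : M *m e1 = e1 -> \det M = 1 -> M = shear (M 0 1).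
Proof.
move=> Me1 detM; have := congr1 (fun v : 'cV[R]_2 => v 0 0) Me1.
have := congr1 (fun v : 'cV[R]_2 => v 1 0) Me1.
mx2E; rewrite !mulr1 !mulr0 !addr0 => M10 M00.
rewrite det_mx2 M00 M10 mul1r mulr0 subr0 in detM.
by apply: matrix2P; mx2E; rewrite ?M00 ?M10 ?detM; ring.
Qed.

Lemma mulmx_shear_combination (lam a : R) (A : 'M[R]_2) :
  lam *: (A *m shear a) + (1 - lam) *: A = A *m shear (lam * a).
Proof. by apply: matrix2P; mx2E; ring. Qed.

Lemma vnormE (v : 'cV[R]_2) : vnorm v = Num.sqrt ((v^T *m v) 0 0).
Proof.
by rewrite /vnorm mxE; congr Num.sqrt; apply: eq_bigr => i _; rewrite !mxE expr2.
Qed.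

Lemma vnorm_SO2 (Q : 'M[R]_2) (v : 'cV[R]_2) : SO2 Q -> vnorm (Q *m v) = vnorm v.
Proof. by case=> QTQ _; rewrite !vnormE trmx_mul mulmxA -(mulmxA v^T) QTQ mulmx1. Qed.

Lemma vnorm_le1 (v : 'cV[R]_2) : (vnorm v <= 1) = (v 0 0 ^+ 2 + v 1 0 ^+ 2 <= 1).
Proof. by rewrite /vnorm sum_ord2 -{1}sqrtr1 ler_sqrt. Qed.

Lemma vnorm_eq1 (v : 'cV[R]_2) : vnorm v = 1 <-> v 0 0 ^+ 2 + v 1 0 ^+ 2 = 1.
Proof.
rewrite /vnorm sum_ord2; split => [h | ->]; last exact: sqrtr1.
by rewrite -[LHS]sqr_sqrtr ?h ?expr1n // addr_ge0 ?sqr_ge0.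
Qed.

Lemma vnorm_e1 : vnorm e1 = 1.
Proof. by apply/vnorm_eq1; mx2E; ring. Qed.

Lemma vnorm_shear_le1 (a : R) (s : 'cV[R]_2) : s 0 0 ^+ 2 + s 1 0 ^+ 2 = 1 ->
  (vnorm (shear a *m s) <= 1) = (a * s 1 0 * (a * s 1 0 + 2 * s 0 0) <= 0).
Proof.
move=> s_unit; rewrite vnorm_le1 -subr_le0 -[X in _ - X]s_unit.
by congr (_ <= _); mx2E; ring.
Qed.

Lemma SO2_shear_decomposition (Q N : 'M[R]_2) :
  SO2 Q -> \det N = 1 -> Q *m e1 = N *m e1 -> N = Q *m shear ((Q^T *m N) 0 1).
Proof.
move=> [QTQ detQ] detN QNe1; rewrite -fixed_e1_shear.
- by rewrite mulmxA (mulmx1C QTQ) mul1mx.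
- by rewrite -mulmxA -QNe1 mulmxA QTQ mul1mx.
- by rewrite det_mulmx det_tr detQ detN mulr1.
Qed.

Lemma M_e1_SO2_shear (Q : 'M[R]_2) (a : R) : SO2 Q -> M_e1 (Q *m shear a).
Proof.
move=> Q_SO2; split; first by rewrite det_mulmx det_shear Q_SO2.2 mulr1.
by rewrite -mulmxA shear_e1 vnorm_SO2 // vnorm_e1.
Qed.

Lemma N_s_SO2_shear (Q : 'M[R]_2) (s : 'cV[R]_2) (a : R) :
  SO2 Q -> N_s s (Q *m shear a) <-> vnorm (shear a *m s) <= 1.
Proof.
move=> Q_SO2; rewrite /N_s -mulmxA vnorm_SO2 //.
by split=> [[] | ?] //; split; first exact: (M_e1_SO2_shear a Q_SO2).1.
Qed.

Lemma K_s_scaled (lam a : R) (s : 'cV[R]_2) :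
  0 < lam -> s 0 0 ^+ 2 + s 1 0 ^+ 2 = 1 -> s = e2 \/ s 0 0 * s 1 0 != 0 ->
  K_s s lam (lam * a) <-> a * s 1 0 * (a * s 1 0 + 2 * s 0 0) <= 0.
Proof.
move=> lam_gt0 s_unit s_cases; rewrite /K_s /=.
have [-> | s_neq_e2] := eqVneq s e2.
  rewrite /e2 !mxE /= mulr1 mulr0 addr0 -expr2 le_eqVlt ltNge sqr_ge0 orbF sqrf_eq0.
  by rewrite (rwP eqP) mulf_eq0 gt_eqF.
have {s_cases} s01_neq0 : s 0 0 * s 1 0 != 0.
  by case: s_cases => // /eqP; rewrite (negbTE s_neq_e2).
have s1_neq0 : s 1 0 != 0 by move: s01_neq0; rewrite mulf_eq0 negb_or => /andP[].
set t := s 0 0 / s 1 0.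
have s1_sqr_gt0 : 0 < s 1 0 ^+ 2 by rewrite exprn_even_gt0.
have s01E : s 0 0 * s 1 0 = t * s 1 0 ^+ 2 by rewrite /t expr2 mulrA divfK.
have -> : a * s 1 0 * (a * s 1 0 + 2 * s 0 0) = s 1 0 ^+ 2 * (a * (a + 2 * t)).
  by rewrite /t; field.
have -> : - (2 * t * lam) = lam * - (2 * t) by ring.
rewrite s01E pmulr_lgt0 // pmulr_llt0 // (pmulr_rle0 _ s1_sqr_gt0).
rewrite pmulr_rle0 // pmulr_rge0 // !ler_pM2l //.
have [t_gt0 | t_lt0 | t_eq0] := ltgtP 0 t.
- have -> : a * (a + 2 * t) = (a - - (2 * t)) * (a - 0) by ring.
  by rewrite mul_subr_le0 //; lra.
- have -> : a * (a + 2 * t) = (a - 0) * (a - - (2 * t)) by ring.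
  by rewrite mul_subr_le0 //; lra.
- by move: s01_neq0; rewrite s01E -t_eq0 mul0r eqxx.
Qed.

Lemma N_s_SO2_shear_K_s (lam a : R) (s : 'cV[R]_2) (Q : 'M[R]_2) :
  0 < lam -> s 0 0 ^+ 2 + s 1 0 ^+ 2 = 1 -> s = e2 \/ s 0 0 * s 1 0 != 0 -> SO2 Q ->
  N_s s (Q *m shear a) <-> K_s s lam (lam * a).
Proof.
move=> lam_gt0 s_unit s_cases Q_SO2.
apply: iff_trans (N_s_SO2_shear s a Q_SO2) _; rewrite vnorm_shear_le1 //.
exact: iff_sym (K_s_scaled a lam_gt0 s_unit s_cases).
Qed.

End Shear.

Theorem lemma3p4 (R : rcfType) (lam : R) (s : 'cV[R]_2) :
  0 < lam < 1 ->
  vnorm s = 1 ->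
  s <> e1 R ->
  (s = e2 R \/ s 0 0 * s 1 0 != 0) ->
  (forall (g : R) (Q : 'M[R]_2), K_s s lam g -> SO2 Q ->
     exists N : 'M[R]_2, M_e1 N /\ N_s s N /\ N *m e1 R = Q *m e1 R /\
       lam *: N + (1 - lam) *: Q = Q *m (1%:M + g *: tens (e1 R) (e2 R)))
  /\
  (forall (N Q : 'M[R]_2), N_s s N -> SO2 Q -> Q *m e1 R = N *m e1 R ->
     exists g : R, K_s s lam g /\
       lam *: N + (1 - lam) *: Q = Q *m (1%:M + g *: tens (e1 R) (e2 R))).
Proof.
move=> /andP[lam_gt0 _] /vnorm_eq1 s_unit _ s_cases; split.
- move=> g Q Kg Q_SO2; set a := g / lam.
  have g_eq : g = lam * a by rewrite /a mulrC divfK ?gt_eqF.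
  rewrite g_eq in Kg *; exists (Q *m shear a); split; first exact: M_e1_SO2_shear.
  split; first exact/(N_s_SO2_shear_K_s a lam_gt0 s_unit s_cases Q_SO2).
  by rewrite -mulmxA shear_e1 mulmx_shear_combination.
- move=> N Q NsN Q_SO2 QNe1; set a := (Q^T *m N) 0 1.
  have N_eq : N = Q *m shear a := SO2_shear_decomposition Q_SO2 NsN.1 QNe1.
  exists (lam * a); rewrite N_eq mulmx_shear_combination; split => //.
  by apply/(N_s_SO2_shear_K_s a lam_gt0 s_unit s_cases Q_SO2); rewrite -N_eq.
Qed.
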